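(* Let $N>1$ and let the parameter space $\Theta$ of the correlated Bernoulli random graph model be nondegenerate. Then there does not exist an unbiased estimator of the heterogeneity correlation $\varrho_H$, i.e. there is no statistic $S:\mathcal{X}\to\mathbb{R}$ with $\mathbb{E}_\theta(S)=\varrho_H(\theta)$ for all $\theta\in\Theta$.
   Context: Correlated Bernoulli random graph model: fix a positive integer $N$ and let $\mathcal{R}=\{(p_1,\dots,p_N,\varrho_1,\dots,\varrho_N): p_i,\varrho_i\in[0,1]\}$; a parameter space is any $\Theta\subseteq\mathcal{R}$. For $\theta\in\Theta$, the pairs $(X_i,Y_i)$, $i=1,\dots,N$, of $\{0,1\}$-valued random variables are independent, $X_i,Y_i$ are marginally Bernoulli$(p_i)$ with Pearson correlation $\varrho_i$ (so $\mathbb{P}(X_i=Y_i=1)=p_i^2+\varrho_ip_i(1-p_i)$, $\mathbb{P}(X_i=Y_i=0)=(1-p_i)^2+\varrho_ip_i(1-p_i)$, $\mathbb{P}(X_i=1,Y_i=0)=\mathbb{P}(X_i=0,Y_i=1)=(1-\varrho_i)p_i(1-p_i)$). Sample space $\mathcal{X}=\{(x,y):x,y\in\{0,1\}^N\}$. Let $\mathcal{R}^o=\{(p_1,\dots,p_N,0,\dots,0):p_i\in\mathbb{R}\}$; $\Theta$ is nondegenerate if $\Theta\cap\mathcal{R}^o$ has an interior point relative to $\mathcal{R}^o$. Let $\mu=\frac1N\sum_i p_i$ and $\sigma^2=\frac1N\sum_i(p_i-\mu)^2$. The heterogeneity correlation is $\varrho_H=\frac{\sigma^2}{\mu(1-\mu)}$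 when $0<\mu<1$; when $\mu\in\{0,1\}$ it is defined by an arbitrary convention with value in $[0,1]$. *)

From HB Require Import structures.
From mathcomp Require Import all_boot all_order all_algebra.
From mathcomp Require Import reals.
Set Implicit Arguments. Unset Strict Implicit. Unset Printing Implicit Defensive.
Import Order.TTheory GRing.Theory Num.Theory.
Local Open Scope ring_scope.

(* A parameter theta = (p_1..p_N, rho_1..rho_N) is a pair of functions 'I_N -> R.
   A parameter space Theta is a predicate on such pairs. *)
Definition param (R : realType) (N : nat) := (('I_N -> R) * ('I_N -> R))%type.

Definition in_calR (R : realType) (N : nat) (th : param R N) : Prop :=
  forall i, (0 <= th.1 i <= 1) /\ (0 <= th.2 i <= 1).

(* Joint pmf of one pair (X_i, Y_i) with Bernoulli(p) marginals and correlation r *)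
Definition cell (R : realType) (p r : R) (a b : bool) : R :=
  match a, b with
  | true, true => p ^+ 2 + r * p * (1 - p)
  | false, false => (1 - p) ^+ 2 + r * p * (1 - p)
  | _, _ => (1 - r) * p * (1 - p)
  end.

Definition sample (N : nat) := ({ffun 'I_N -> bool} * {ffun 'I_N -> bool})%type.

Definition prob (R : realType) (N : nat) (th : param R N) (s : sample N) : R :=
  \prod_(i < N) cell (th.1 i) (th.2 i) (s.1 i) (s.2 i).

Definition expect (R : realType) (N : nat) (th : param R N) (S : sample N -> R) : R :=
  \sum_(s : sample N) S s * prob th s.

Definition mu (R : realType) (N : nat) (p : 'I_N -> R) : R :=
  (\sum_(i < N) p i) / N%:R.

Definition sigma2 (R : realType) (N : nat) (p : 'I_N -> R) : R :=
  (\sum_(i < N) (p i - mu p) ^+ 2) / N%:R.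

(* Heterogeneity correlation; conv is the (arbitrary) convention used when
   mu is 0 or 1. *)
Definition rhoH (R : realType) (N : nat) (conv : param R N -> R) (th : param R N) : R :=
  if (0 < mu th.1 < 1) then sigma2 th.1 / (mu th.1 * (1 - mu th.1)) else conv th.

(* Nondegenerate: Theta ∩ R^o has an interior point relative to
   R^o = {(p, 0) : p in R^N}, R^N with its usual (product / sup-norm) topology. *)
Definition nondegenerate_param (R : realType) (N : nat) (Theta : param R N -> Prop) : Prop :=
  exists p0 : 'I_N -> R, exists eps : R, 0 < eps /\
    forall q : 'I_N -> R, (forall i, `|q i - p0 i| < eps) -> Theta (q, fun _ => 0).

From HB Require Import structures.
From mathcomp Require Import all_boot all_order all_algebra.
From mathcomp Require Import reals.
From mathcomp Require Import ring lra.
Set Implicit Arguments. Unset Strict Implicit. Unset Printing Implicit Defensive.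
Import Order.TTheory GRing.Theory Num.Theory.
Local Open Scope ring_scope.

(* Restrict to uncorrelated parameters (p_1 + t, ..., p_N + t, 0, ..., 0) with
   p not constant (N > 1 lets us find such p inside the open ball of Theta,
   by moving one coordinate).  Along this line E(S) is a polynomial in t, while
   rho_H = sigma^2 / ((mu + t) (1 - mu - t)) with sigma^2 <> 0 has a pole at
   t = -mu; a polynomial cannot agree with it on an interval. *)

Lemma poly_eq0_near0 (F : numFieldType) (p : {poly F}) (r : F) :
  0 < r -> (forall t, `|t| < r -> p.[t] = 0) -> p = 0.
Proof.
move=> r_gt0 p_near0; apply/eqP/contraT => p_neq0.
pose rs := [seq r / k.+2%:R | k <- iota 0 (size p)].
have := max_poly_roots p_neq0 (rs := rs).
rewrite size_map size_iota ltnn; apply.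
- apply/allP => _ /mapP[k _ ->]; apply/eqP/p_near0.
  rewrite ger0_norm ?divr_ge0 ?ler0n ?ltW //.
  by rewrite ltr_pdivrMr ?ltr0n // ltr_pMr // ltr1n.
- rewrite map_inj_uniq ?iota_uniq // => a b /= /(mulfI (lt0r_neq0 r_gt0)).
  by move/invr_inj/eqP; rewrite eqr_nat !eqSS => /eqP.
Qed.

Lemma cst_eq0_of_horner_mul_root (F : numFieldType) (p q : {poly F}) (a x r : F) :
  0 < r -> (forall t, `|t| < r -> p.[t] * q.[t] = a) -> root q x -> a = 0.
Proof.
move=> r_gt0 pq_eq /eqP qx0.
have /(poly_eq0_near0 r_gt0) : forall t, `|t| < r -> (p * q - a%:P).[t] = 0.
  by move=> t /pq_eq; rewrite !hornerE => ->; rewrite subrr.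
move=> /(congr1 (horner^~ x))/eqP.
by rewrite !hornerE qx0 mulr0 sub0r oppr_eq0 => /eqP.
Qed.

Section ShiftLine.
Variables (R : realType) (N : nat).

Definition shift (c : 'I_N -> R) (t : R) : 'I_N -> R := fun i => c i + t.

Definition bernoulli_poly (a : R) (b : bool) : {poly R} :=
  if b then a%:P + 'X else 1 - (a%:P + 'X).

Lemma cell_uncorrelated (p : R) (x y : bool) :
  cell p 0 x y = (if x then p else 1 - p) * (if y then p else 1 - p).
Proof. by case: x; case: y; rewrite /cell; ring. Qed.

Lemma expect_shift_poly (c : 'I_N -> R) (S : sample N -> R) :
  exists P : {poly R}, forall t, P.[t] = expect (shift c t, fun _ => 0) S.
Proof.
exists (\sum_(s : sample N) S s *: \prod_(i < N)
         (bernoulli_poly (c i) (s.1 i) * bernoulli_poly (c i) (s.2 i))).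
move=> t; rewrite horner_sum; apply: eq_bigr => s _.
rewrite hornerZ horner_prod; congr (_ * _); apply: eq_bigr => i _.
by rewrite cell_uncorrelated /bernoulli_poly /shift; case: (s.1 i); case: (s.2 i);
  rewrite !hornerE.
Qed.

Hypothesis N_gt0 : (0 < N)%N.

Lemma mu_shift (c : 'I_N -> R) (t : R) : mu (shift c t) = mu c + t.
Proof.
rewrite /mu big_split /= sumr_const card_ord -mulr_natr.
by field; rewrite pnatr_eq0 -lt0n.
Qed.

Lemma sigma2_shift (c : 'I_N -> R) (t : R) : sigma2 (shift c t) = sigma2 c.
Proof.
rewrite /sigma2 mu_shift; congr (_ / _); apply: eq_bigr => i _.
by rewrite /shift; congr (_ ^+ 2); ring.
Qed.

Lemma mu_in01 (c : 'I_N -> R) : (forall i, 0 <= c i <= 1) -> 0 <= mu c <= 1.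
Proof.
move=> c01; have N_pos : (0 : R) < N%:R by rewrite ltr0n.
rewrite /mu ler_pdivlMr // ler_pdivrMr // mul0r mul1r.
have <- : \sum_(i < N) (1 : R) = N%:R by rewrite sumr_const card_ord.
by rewrite sumr_ge0 ?ler_sum // => i _; case/andP: (c01 i).
Qed.

Lemma sigma2_eq0_const (c : 'I_N -> R) i : sigma2 c = 0 -> c i = mu c.
Proof.
rewrite /sigma2 => /eqP; rewrite mulf_eq0 invr_eq0 pnatr_eq0 eqn0Ngt N_gt0 orbF.
move=> /eqP/psumr_eq0P sum_sq0; apply/eqP; rewrite -subr_eq0 -sqrf_eq0.
by apply/eqP/sum_sq0 => // j _; apply: sqr_ge0.
Qed.

(* The margin [r / 2] keeps [mu c + t] away from 0 and 1, so the convention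
   [conv] never enters. *)
Lemma rhoH_shift (conv : param R N -> R) (c : 'I_N -> R) (r t : R) :
  (forall u, `|u| < r -> forall i, 0 <= shift c u i <= 1) -> `|t| < r / 2 ->
  rhoH conv (shift c t, fun _ => 0) * ((mu c + t) * (1 - (mu c + t))) = sigma2 c.
Proof.
move=> line01 t_small.
have mu01 u : `|u| < r -> 0 <= mu c + u <= 1.
  by move=> u_small; rewrite -mu_shift; apply/mu_in01/line01.
move: t_small; rewrite ltr_norml => /andP[t_lb t_ub].
have /andP[lo _] : 0 <= mu c + (t - r / 2) <= 1.
  by apply: mu01; rewrite ltr_norml; apply/andP; split; lra.
have /andP[_ hi] : 0 <= mu c + (t + r / 2) <= 1.
  by apply: mu01; rewrite ltr_norml; apply/andP; split; lra.
have r_gt0 : 0 < r by lra.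
have mu_t01 : 0 < mu c + t < 1 by apply/andP; split; lra.
rewrite /rhoH /= mu_shift sigma2_shift mu_t01.
by field; case/andP: mu_t01 => ? ?; rewrite !gt_eqF //; lra.
Qed.

End ShiftLine.

Lemma nonconstant_near (R : realType) (N : nat) (p0 : 'I_N -> R) (eps : R) :
  (1 < N)%N -> 0 < eps ->
  exists c : 'I_N -> R, sigma2 c != 0 /\
    forall q : 'I_N -> R, (forall i, `|q i - c i| < eps / 2) ->
      forall i, `|q i - p0 i| < eps.
Proof.
move=> N_gt1 eps_gt0; have N_gt0 := ltnW N_gt1.
have [p0_const|p0_nonconst] := eqVneq (sigma2 p0) 0; last first.
  by exists p0; split=> // q near_p0 i; have := near_p0 i; lra.
pose i0 : 'I_N := Ordinal N_gt0; pose i1 : 'I_N := Ordinal N_gt1.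
pose c i := p0 i + (if i == i0 then eps / 2 else 0).
exists c; split.
  apply/eqP => /(sigma2_eq0_const N_gt0) c_const.
  have := c_const i0; have := c_const i1.
  have := sigma2_eq0_const N_gt0 i0 p0_const.
  have := sigma2_eq0_const N_gt0 i1 p0_const.
  by rewrite /c eqxx /=; lra.
move=> q near_c i; have := near_c i.
by rewrite /c !ltr_norml; case: (i == i0) => /andP[? ?]; apply/andP; split; lra.
Qed.

Theorem theorem4 (R : realType) (N : nat) (Theta : param R N -> Prop)
  (conv : param R N -> R) :
  (1 < N)%N ->
  (forall th, Theta th -> in_calR th) ->
  nondegenerate_param Theta ->
  (forall th, 0 <= conv th <= 1) ->
  ~ (exists S : sample N -> R,
       forall th, Theta th -> expect th S = rhoH conv th).
Proof.
move=> N_gt1 Theta_calR [p0 [eps [eps_gt0 ball_Theta]]] _ [S S_unbiased].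
have N_gt0 := ltnW N_gt1.
have [c [c_nonconst near_c]] := nonconstant_near p0 N_gt1 eps_gt0.
have line_Theta u : `|u| < eps / 2 -> Theta (shift c u, fun _ => 0).
  by move=> u_small; apply/ball_Theta/near_c => i; rewrite /shift addrC addKr.
have line01 u : `|u| < eps / 2 -> forall i, 0 <= shift c u i <= 1.
  by move=> /line_Theta /Theta_calR calR i; case: (calR i).
have [P P_expect] := expect_shift_poly c S.
pose q : {poly R} := ((mu c)%:P + 'X) * (1 - ((mu c)%:P + 'X)).
move/eqP: c_nonconst; apply.
apply: (@cst_eq0_of_horner_mul_root _ P q _ (- mu c) (eps / 2 / 2)).
- lra.
- move=> t t_small; rewrite P_expect S_unbiased; last first.
    by apply: line_Theta; apply: lt_trans t_small _; lra.
  rewrite /q !(hornerM, hornerD, hornerN, hornerC, hornerX).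
  exact (rhoH_shift N_gt0 conv line01 t_small).
- by rewrite /root !hornerE addrN mul0r.
Qed.
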